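(* Let $d \geq 2$, $N, K \geq 1$ be integers, $\mathbf{y}_1,\ldots,\mathbf{y}_N \in \mathbb{R}^d$ with matrix $\mathbf{Y} = [\mathbf{y}_1,\ldots,\mathbf{y}_N]$, and $\rho_k^{[i]} \geq 0$ with $\sum_{k=1}^K \rho_k^{[i]} = 1$ for each $i$. Put $\mathbf{A}_k = \sum_{i} \rho_k^{[i]}\mathbf{y}_i\mathbf{y}_i^\mathrm{T}$, $\gamma_k = \sum_i \rho_k^{[i]}$, $\lambda_k = $ largest eigenvalue of $\mathbf{A}_k$, and assume $\gamma_k > 0$ for all $k$. For $S\subseteq[K]$ let $\sigma^2(S) = \big(\|\mathbf{Y}\|_\mathrm{F}^2 - \sum_{k\in S}\lambda_k\big)/\big(dN - \sum_{k\in S}\gamma_k\big)$ and $\mathcal{V} = \{S \subseteq [K] : \sigma^2(S) \leq \lambda_k/\gamma_k \text{ for all } k\in S\}$. Call $S$ saturated if $S \in \mathcal{V}$ and $\sigma^2(S) > \lambda_j/\gamma_j$ for all $j\in[K]\setminus S$. Then there exists a unique saturated set.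
   Context: $[K] = \{1,\ldots,K\}$; $\|\cdot\|_\mathrm{F}$ is the Frobenius norm. *)

From mathcomp Require Import all_boot all_order all_algebra.
From mathcomp Require Export reals.
From mathcomp Require Export all_boot all_order all_algebra.
Set Implicit Arguments. Unset Strict Implicit. Unset Printing Implicit Defensive.
Import Order.TTheory GRing.Theory Num.Theory.
Local Open Scope ring_scope.

Section Defs.
Variables (R : realType) (d N K : nat).
Variable (Y : 'M[R]_(d, N)).
Variable (rho : 'I_N -> 'I_K -> R).   (* rho i k = rho_k^[i] *)

Definition Amat (k : 'I_K) : 'M[R]_d :=
  \sum_(i < N) rho i k *: (col i Y *m (col i Y)^T).

Definition gam (k : 'I_K) : R := \sum_(i < N) rho i k.

Definition frob2 : R := \sum_(i < d) \sum_(j < N) Y i j ^+ 2.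

Definition is_largest_eigenvalue (n : nat) (A : 'M[R]_n) (l : R) : Prop :=
  eigenvalue A l /\ forall a : R, eigenvalue A a -> a <= l.

Variable (lam : 'I_K -> R).           (* lam k = largest eigenvalue of A_k *)

Definition sigma2 (S : {set 'I_K}) : R :=
  (frob2 - \sum_(k in S) lam k) / ((d * N)%:R - \sum_(k in S) gam k).

Definition in_V (S : {set 'I_K}) : Prop :=
  forall k, k \in S -> sigma2 S <= lam k / gam k.

Definition saturated (S : {set 'I_K}) : Prop :=
  in_V S /\ forall j, j \notin S -> lam j / gam j < sigma2 S.
End Defs.

From mathcomp Require Import all_boot all_order all_algebra reals.
From mathcomp Require Import ring lra.
Import Order.TTheory GRing.Theory Num.Theory.
Set Implicit Arguments. Unset Strict Implicit. Unset Printing Implicit Defensive.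
Local Open Scope ring_scope.

(** Write s(S) = (frob2 - sum_(k in S) lam_k) / (dN - sum_(k in S) gam_k). For k outside U,
    s(U) is the mediant of s(k |: U) and lam_k / gam_k, so it lies between them.
    Hence a minimiser of s of maximal cardinality is saturated: removing an element
    cannot decrease s, and adding one would strictly increase it. If A and B are
    saturated with s(A) <= s(B), then B is contained in A, and the inclusion cannot be
    strict: s(B) would be the mediant of s(A) and of a ratio (sum of lam_j) / (sum of
    gam_j) over A :\: B that lies below s(B), forcing s(B) < s(A). *)

Section Mediant.
Variables (F : realFieldType) (p1 q1 p2 q2 : F).
Hypotheses (q1_gt0 : 0 < q1) (q2_gt0 : 0 < q2).

Lemma le_mediantl : (p1 / q1 <= (p1 + p2) / (q1 + q2)) = (p1 / q1 <= p2 / q2).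
Proof.
have e : (p1 + p2) / (q1 + q2) - p1 / q1 = q2 / (q1 + q2) * (p2 / q2 - p1 / q1).
  by field; rewrite !gt_eqF ?addr_gt0.
by rewrite -subr_ge0 e pmulr_rge0 ?divr_gt0 ?addr_gt0 // subr_ge0.
Qed.

Lemma le_mediantr : ((p1 + p2) / (q1 + q2) <= p2 / q2) = (p1 / q1 <= p2 / q2).
Proof.
have e : p2 / q2 - (p1 + p2) / (q1 + q2) = q1 / (q1 + q2) * (p2 / q2 - p1 / q1).
  by field; rewrite !gt_eqF ?addr_gt0.
by rewrite -subr_ge0 e pmulr_rge0 ?divr_gt0 ?addr_gt0 // subr_ge0.
Qed.
End Mediant.

Section SaturatedRatio.
Variables (F : realFieldType) (K : nat) (a b : F) (lam w : 'I_K -> F).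
Hypothesis w_gt0 : forall k, 0 < w k.
Hypothesis sum_w_lt : \sum_k w k < b.

Definition ratio (S : {set 'I_K}) : F :=
  (a - \sum_(k in S) lam k) / (b - \sum_(k in S) w k).

Definition ratio_saturated (S : {set 'I_K}) : Prop :=
  (forall k, k \in S -> ratio S <= lam k / w k) /\
  (forall j, j \notin S -> lam j / w j < ratio S).

Lemma ratio_den_gt0 (S : {set 'I_K}) : 0 < b - \sum_(k in S) w k.
Proof.
rewrite subr_gt0; apply: le_lt_trans sum_w_lt.
rewrite [leRHS](bigID (mem S)) /= lerDl.
by apply: sumr_ge0 => k _; apply: ltW.
Qed.

Lemma ratio_setU1 (U : {set 'I_K}) k : k \notin U ->
  ratio U = ((a - \sum_(i in k |: U) lam i) + lam k) /
            ((b - \sum_(i in k |: U) w i) + w k).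
Proof. by move=> kU; rewrite !big_setU1 //=; congr (_ / _); ring. Qed.

Lemma le_ratio_setD1 (S : {set 'I_K}) k : k \in S ->
  ratio S <= ratio (S :\ k) -> ratio S <= lam k / w k.
Proof.
move=> kS; have kSk : k \notin S :\ k by rewrite setD11.
rewrite (ratio_setU1 kSk) setD1K //.
by rewrite /ratio le_mediantl ?ratio_den_gt0.
Qed.

Lemma ratio_setU1_eq (U : {set 'I_K}) j : j \notin U ->
  ratio U <= ratio (j |: U) -> ratio U <= lam j / w j -> ratio (j |: U) = ratio U.
Proof.
move=> jU; rewrite [ratio U](ratio_setU1 jU) /ratio le_mediantr ?ratio_den_gt0 //.
by move=> le_U le_j; apply/eqP; rewrite eq_le le_U le_mediantl ?ratio_den_gt0 // le_j.
Qed.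

Lemma ratio_lt_proper (A B : {set 'I_K}) : B \proper A ->
  (forall j, j \in A -> j \notin B -> lam j / w j < ratio B) -> ratio B < ratio A.
Proof.
move=> /properP[/setIidPr sBA [j jA jB]] ltAB.
have sum_lt : \sum_(i in A :\: B) lam i < ratio B * \sum_(i in A :\: B) w i.
  rewrite mulr_sumr; apply: ltr_sum => [|i].
    by apply/hasP; exists j; rewrite ?inE ?jA ?jB.
  by rewrite inE => /andP[iB iA]; rewrite -ltr_pdivrMr // ltAB.
have ratioBE : ratio B * (b - \sum_(k in B) w k) = a - \sum_(k in B) lam k.
  by rewrite mulfVK ?gt_eqF ?ratio_den_gt0.
rewrite {2}/ratio ltr_pdivlMr ?ratio_den_gt0 // !(big_setID (A := A) B) sBA /=.
by rewrite opprD addrA mulrDr ratioBE mulrN; lra.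
Qed.

Lemma ratio_saturated_le_eq (A B : {set 'I_K}) :
  ratio_saturated A -> ratio_saturated B -> ratio A <= ratio B -> A = B.
Proof.
move=> [_ outA] [inB outB] leAB.
have sBA : B \subset A.
  apply/subsetP => k kB; apply/negPn/negP => kA.
  by have := lt_le_trans (outA k kA) (le_trans leAB (inB k kB)); rewrite ltxx.
have [ltBA | ] := boolP (B \proper A).
  by have := ratio_lt_proper ltBA (fun j _ => outB j); rewrite ltNge leAB.
by rewrite properE sBA negbK => sAB; apply/eqP; rewrite eqEsubset sAB.
Qed.

Lemma exists_ratio_saturated : exists S, ratio_saturated S.
Proof.
have [Smin _ min_ratio] := @arg_minP _ _ {set 'I_K} set0 predT ratio isT.
have [S /eqP eqS max_card] :=
  @arg_maxnP {set 'I_K} Smin (fun S => ratio S == ratio Smin) (fun S => #|S|) (eqxx _).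
exists S; split => [k kS | j jS].
  by apply: le_ratio_setD1 kS _; rewrite eqS; apply: min_ratio.
rewrite ltNge; apply/negP => le_j.
have le_Sj : ratio S <= ratio (j |: S) by rewrite eqS; apply: min_ratio.
have eq_j := ratio_setU1_eq jS le_Sj le_j.
have := max_card (j |: S); rewrite eq_j eqS eqxx => /(_ isT).
by move=> /=; rewrite cardsU1 jS add1n ltnn.
Qed.

Theorem exists_unique_ratio_saturated : exists! S, ratio_saturated S.
Proof.
have [S satS] := exists_ratio_saturated; exists S; split => // T satT.
have [leST | /ltW leTS] := leP (ratio S) (ratio T).
  exact: ratio_saturated_le_eq.
exact/esym/ratio_saturated_le_eq.
Qed.

End SaturatedRatio.

Lemma sum_gam (R : realType) (N K : nat) (rho : 'I_N -> 'I_K -> R) :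
  (forall i, \sum_(k < K) rho i k = 1) -> \sum_k gam rho k = N%:R.
Proof.
move=> rho_sum; rewrite /gam exchange_big /=.
by under eq_bigr do rewrite rho_sum; rewrite sumr_const card_ord.
Qed.

Theorem lemma5 (R : realType) (d N K : nat)
  (Y : 'M[R]_(d, N)) (rho : 'I_N -> 'I_K -> R) (lam : 'I_K -> R) :
  (2 <= d)%N -> (1 <= N)%N -> (1 <= K)%N ->
  (forall i k, 0 <= rho i k) ->
  (forall i, \sum_(k < K) rho i k = 1) ->
  (forall k, 0 < gam rho k) ->
  (forall k, is_largest_eigenvalue (Amat Y rho k) (lam k)) ->
  exists! S : {set 'I_K}, saturated Y rho lam S.
Proof.
(* Only gam_k > 0 and sum_k gam_k = N < dN matter: lam may be any real vector. *)
move=> d_ge2 N_ge1 _ _ rho_sum gam_gt0 _.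
have sum_gam_lt : \sum_k gam rho k < (d * N)%:R.
  by rewrite sum_gam // ltr_nat ltn_Pmull.
exact: (exists_unique_ratio_saturated (frob2 Y) lam gam_gt0 sum_gam_lt).
Qed.
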